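(* Let $G$ be a finite group, $\alpha\colon G^3\to\mathrm{U}(1)$ a normalized 3-cocycle, $\mathcal{G}=\mathcal{G}(G,\mathrm{U}(1),\alpha)$, and $\Sigma$ a connected closed oriented surface of genus $\geq1$. Fix a homomorphism $\tilde\rho\colon\pi_1\Sigma\to G$ and let $(\tilde\rho,\tilde\gamma)$ and $(\tilde\rho,\tilde\gamma')$ be two weak representations $\pi_1\Sigma\to\mathcal{G}$ lifting $\tilde\rho$. Then the corresponding flat $\mathcal{G}$-bundles are isomorphic over the identity of the underlying $G$-bundle (i.e. there is a 1-isomorphism between the weak representations whose underlying element of $G$ is $1$) if and only if $\langle\Psi_\Sigma,\tilde\gamma\rangle=\langle\Psi_\Sigma,\tilde\gamma'\rangle$ in $\mathrm{U}(1)$, where $\Psi_\Sigma$ is a cycle representing the fundamental class in $H_2(\pi_1\Sigma;\mathbb{Z})$.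
   Context: $\mathcal{G}(G,\mathrm{U}(1),\alpha)$ is the monoidal groupoid with objects $G$, automorphisms of each object $\mathrm{U}(1)$ (no other morphisms), $g\otimes h=gh$, associator given by $\alpha$. A weak representation (monoidal functor) $\pi_1\Sigma\to\mathcal{G}$ lifting $\tilde\rho$ is a normalized 2-cochain $\tilde\gamma\colon(\pi_1\Sigma)^2\to\mathrm{U}(1)$ with $d\tilde\gamma=\tilde\rho^*\alpha$, where $(d\tilde\gamma)(a,b,c)=\tilde\gamma(b,c)\tilde\gamma(ab,c)^{-1}\tilde\gamma(a,bc)\tilde\gamma(a,b)^{-1}$ and $\tilde\rho^*\alpha(a,b,c)=\alpha(\tilde\rho a,\tilde\rho b,\tilde\rho c)$. A 1-isomorphism $(\tilde\rho,\tilde\gamma)\to(\tilde\rho',\tilde\gamma')$ is a monoidal natural isomorphism, given by $\tilde h\in G$ with $\tilde h\tilde\rho\tilde h^{-1}=\tilde\rho'$ and $\tilde\eta\colon\pi_1\Sigma\to\mathrm{U}(1)$ satisfying the monoidality condition. The pairing $\langle\Psi_\Sigma,\tilde\gamma\rangle$ is the group-(co)homology pairing, well defined since $d\tilde\gamma$ pulls back from $G$ and is the same for both lifts; for genus 1 with $\pi_1\Sigma=\mathbb{Z}^2=\langle e_1,e_2\rangle$ and $\Psi_\Sigma=e_1\otimes e_2-e_2\otimes e_1$ it equals $\tilde\gamma(e_1,e_2)/\tilde\gamma(e_2,e_1)$. *)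

(* finite group G as a finGroupType, U(1) as the unit circle
   in the complex numbers R[i] over a realType R, and the surface group
   pi_1(Sigma_g) as an abstract group given by its standard presentation. *)
From mathcomp Require Import all_boot all_order all_algebra all_fingroup.
From mathcomp Require Import reals complex.
Set Implicit Arguments.
Unset Strict Implicit.
Unset Printing Implicit Defensive.
Import GRing.Theory Num.Theory.
Local Open Scope ring_scope.

Definition is_group (T : Type) (mul : T -> T -> T) (inv : T -> T) (one : T) : Prop :=
  [/\ forall x y z, mul x (mul y z) = mul (mul x y) z,
      forall x, mul one x = x,
      forall x, mul x one = x,
      forall x, mul (inv x) x = one
    & forall x, mul x (inv x) = one].

Definition is_hom (T S : Type) (mulT : T -> T -> T) (mulS : S -> S -> S)
  (f : T -> S) : Prop :=
  forall x y, f (mulT x y) = mulS (f x) (f y).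

Definition eval_word (T : Type) (mul : T -> T -> T) (inv : T -> T) (one : T)
  (w : seq (T * bool)) : T :=
  foldr (fun l acc => mul (if l.2 then inv l.1 else l.1) acc) one w.

Definition surface_relator (T : Type) (g : nat) (a b : 'I_g -> T) : seq (T * bool) :=
  flatten [seq [:: (a i, false); (b i, false); (a i, true); (b i, true)]
          | i <- enum 'I_g].

(** (Gam, mul, inv, one) is a group with generators a_i, b_i (i < g) presented
    by the single relation prod_i [a_i, b_i] = 1, i.e. it is (isomorphic to)
    the fundamental group of the closed oriented surface of genus g, with
    a_i, b_i a standard system of generators. *)
Definition surface_group_presentation (Gam : Type) (mul : Gam -> Gam -> Gam)
  (inv : Gam -> Gam) (one : Gam) (g : nat) (a b : 'I_g -> Gam) : Prop :=
  [/\ is_group mul inv one,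
      eval_word mul inv one (surface_relator a b) = one
    & forall (H : Type) (mulH : H -> H -> H) (invH : H -> H) (oneH : H),
        is_group mulH invH oneH ->
        forall x y : 'I_g -> H,
          eval_word mulH invH oneH (surface_relator x y) = oneH ->
          (exists f : Gam -> H, is_hom mul mulH f /\
              forall i, f (a i) = x i /\ f (b i) = y i) /\
          (forall f1 f2 : Gam -> H,
              is_hom mul mulH f1 -> (forall i, f1 (a i) = x i /\ f1 (b i) = y i) ->
              is_hom mul mulH f2 -> (forall i, f2 (a i) = x i /\ f2 (b i) = y i) ->
              forall z, f1 z = f2 z)].

Definition U1_valued (R : realType) (T : Type) (f : T -> R[i]) : Prop :=
  forall x, `|f x| = 1.

Definition normalized_3cocycle (R : realType) (gT : finGroupType)
  (alpha : gT -> gT -> gT -> R[i]) : Prop :=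
  [/\ forall a b c, `|alpha a b c| = 1,
      forall b c, alpha 1%g b c = 1,
      forall a c, alpha a 1%g c = 1,
      forall a b, alpha a b 1%g = 1
    & forall a b c d,
        alpha b c d / alpha (a * b)%g c d * alpha a (b * c)%g d
          / alpha a b (c * d)%g * alpha a b c = 1].

Definition cobound2 (R : realType) (Gam : Type) (mul : Gam -> Gam -> Gam)
  (gamma : Gam -> Gam -> R[i]) (a b c : Gam) : R[i] :=
  gamma b c / gamma (mul a b) c * gamma a (mul b c) / gamma a b.

(** A weak representation pi_1 Sigma -> G(G, U(1), alpha) lifting rho, i.e. a
    monoidal functor: a normalized U(1)-valued 2-cochain gamma with
    d gamma = rho^* alpha. *)
Definition weak_rep_lifting (R : realType) (gT : finGroupType) (Gam : Type)
  (mul : Gam -> Gam -> Gam) (one : Gam)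
  (alpha : gT -> gT -> gT -> R[i]) (rho : Gam -> gT)
  (gamma : Gam -> Gam -> R[i]) : Prop :=
  [/\ forall x y, `|gamma x y| = 1,
      forall x, gamma one x = 1,
      forall x, gamma x one = 1
    & forall x y z, cobound2 mul gamma x y z = alpha (rho x) (rho y) (rho z)].

(** A 1-isomorphism (monoidal natural isomorphism) (rho,gamma) -> (rho,gamma')
    whose underlying element h of G is 1: components eta : Gam -> U(1)
    (automorphisms of the objects rho x), and the monoidality condition
    eta(xy) o gamma(x,y) = gamma'(x,y) o (eta(x) (x) eta(y)). *)
Definition iso_over_identity (R : realType) (Gam : Type) (mul : Gam -> Gam -> Gam)
  (gamma gamma' : Gam -> Gam -> R[i]) : Prop :=
  exists eta : Gam -> R[i],
    U1_valued eta /\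
    forall x y, eta (mul x y) * gamma x y = gamma' x y * (eta x * eta y).

(** For the relator
    r = y_1 ... y_n (letters y_k = x or x^{-1}) with prefixes w_k = y_1...y_k,
      Psi_Sigma = sum_k [w_{k-1} | y_k]  -  sum_{k : y_k = x^{-1}} [x | x^{-1}],
    which is a 2-cycle representing the fundamental class of H_2(pi_1 Sigma; Z)
    (for g = 1 it is homologous to e1 (x) e2 - e2 (x) e1). *)
Fixpoint pair_aux (R : realType) (Gam : Type) (mul : Gam -> Gam -> Gam)
  (inv : Gam -> Gam) (gamma : Gam -> Gam -> R[i]) (w : Gam)
  (ls : seq (Gam * bool)) : R[i] :=
  match ls with
  | [::] => 1
  | (x, false) :: ls' => gamma w x * pair_aux mul inv gamma (mul w x) ls'
  | (x, true) :: ls' =>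
      gamma w (inv x) / gamma x (inv x) * pair_aux mul inv gamma (mul w (inv x)) ls'
  end.

Definition pairing_fundamental (R : realType) (Gam : Type) (mul : Gam -> Gam -> Gam)
  (inv : Gam -> Gam) (one : Gam) (g : nat) (a b : 'I_g -> Gam)
  (gamma : Gam -> Gam -> R[i]) : R[i] :=
  pair_aux mul inv gamma one (surface_relator a b).

(* Let d = gamma' / gamma.  Since d gamma = d gamma' = rho^* alpha, d is a
   normalized U(1)-valued 2-cocycle on pi_1 Sigma, and a 1-isomorphism over
   the identity is exactly a U(1)-valued eta with eta(xy) = eta(x) eta(y) d(x,y).
   The pairing is multiplicative in the cochain, so the claim is that such an
   eta exists iff <Psi, d> = 1.  Given eta, the pairing of d telescopes to the
   image of the surface relator in the abelian group U(1), which is 1.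
   Conversely, if <Psi, d> = 1 then the lifts (1, a_i), (1, b_i) satisfy the
   surface relation in the central extension U(1) x_d pi_1 Sigma, with product
   (u, x) (v, y) = (u v d(x, y), x y); the universal property of the
   presentation gives a splitting x |-> (eta x, x), and eta is the required
   trivialization. *)

From mathcomp Require Import all_boot all_order all_algebra all_fingroup.
From mathcomp Require Import reals complex.
From mathcomp Require Import ring.
Import GRing.Theory Num.Theory.
Local Open Scope ring_scope.
Set Implicit Arguments.
Unset Strict Implicit.

Lemma norm1_neq0 (R : realType) (z : R[i]) : `|z| = 1 -> z != 0.
Proof. by move=> z1; rewrite -normr_eq0 z1 oner_eq0. Qed.

Lemma surface_relator_map (T S : Type) (f : T -> S) (g : nat) (a b : 'I_g -> T) :
  [seq (f l.1, l.2) | l <- surface_relator a b] = surface_relator (f \o a) (f \o b).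
Proof. by rewrite /surface_relator map_flatten -map_comp. Qed.

Lemma eval_surface_relator_comm (F : fieldType) (g : nat) (x y : 'I_g -> F) :
  (forall i, x i != 0) -> (forall i, y i != 0) ->
  eval_word *%R GRing.inv 1 (surface_relator x y) = 1.
Proof.
move=> x_neq0 y_neq0; rewrite /surface_relator.
elim: (enum 'I_g) => [|i s IH] //=.
by rewrite IH mulr1; field; rewrite x_neq0 y_neq0.
Qed.

Lemma eval_word_cons (T : Type) (mul : T -> T -> T) (inv : T -> T) (one : T) l ls :
  eval_word mul inv one (l :: ls) =
  mul (if l.2 then inv l.1 else l.1) (eval_word mul inv one ls).
Proof. by []. Qed.

Lemma cobound2_div (R : realType) (Gam : Type) (mul : Gam -> Gam -> Gam)
    (gamma gamma' : Gam -> Gam -> R[i]) x y z :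
  cobound2 mul (fun x y => gamma' x y / gamma x y) x y z =
  cobound2 mul gamma' x y z / cobound2 mul gamma x y z.
Proof. by rewrite /cobound2 !invfM !invrK; ring. Qed.

Definition normalized_U1_2cocycle (R : realType) (Gam : Type)
    (mul : Gam -> Gam -> Gam) (one : Gam) (d : Gam -> Gam -> R[i]) : Prop :=
  [/\ forall x y, `|d x y| = 1, forall x, d one x = 1, forall x, d x one = 1
    & forall x y z, cobound2 mul d x y z = 1].

Definition trivializes (R : realType) (Gam : Type) (mul : Gam -> Gam -> Gam)
    (eta : Gam -> R[i]) (d : Gam -> Gam -> R[i]) : Prop :=
  forall x y, eta (mul x y) = eta x * eta y * d x y.

Section Pairing.
Variables (R : realType) (Gam : Type) (mul : Gam -> Gam -> Gam) (inv : Gam -> Gam).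

Lemma pair_aux_norm1 (d : Gam -> Gam -> R[i]) :
  (forall x y, `|d x y| = 1) -> forall ls w, `|pair_aux mul inv d w ls| = 1.
Proof.
move=> d_norm; elim=> [|[x [|]] ls IH] w /=; first exact: normr1.
  by rewrite !normrM normfV !d_norm IH invr1 !mulr1.
by rewrite normrM d_norm IH mulr1.
Qed.

Lemma pair_aux_div (d d' : Gam -> Gam -> R[i]) ls w :
  pair_aux mul inv (fun x y => d' x y / d x y) w ls =
  pair_aux mul inv d' w ls / pair_aux mul inv d w ls.
Proof.
elim: ls w => [|[x [|]] ls IH] w /=; first by rewrite invr1 mulr1.
  by rewrite IH !invfM !invrK; ring.
by rewrite IH !invfM; ring.
Qed.

Lemma pairing_fundamental_div (one : Gam) (g : nat) (a b : 'I_g -> Gam)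
    (d d' : Gam -> Gam -> R[i]) :
  pairing_fundamental mul inv one a b (fun x y => d' x y / d x y) =
  pairing_fundamental mul inv one a b d' / pairing_fundamental mul inv one a b d.
Proof. exact: pair_aux_div. Qed.

Variable one : Gam.
Hypothesis Ggroup : is_group mul inv one.

(* Telescoping; the last factor is the image of the word in the abelian
   group R[i]^*. *)
Lemma pair_aux_trivialized (eta : Gam -> R[i]) (d : Gam -> Gam -> R[i]) :
  (forall x, eta x != 0) -> eta one = 1 -> trivializes mul eta d ->
  forall ls w, pair_aux mul inv d w ls * eta w *
                 eval_word *%R GRing.inv 1 [seq (eta l.1, l.2) | l <- ls] =
               eta (mul w (eval_word mul inv one ls)).
Proof.
case: Ggroup => mulA _ mulg1 _ mulgV eta_neq0 eta1 eta_d.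
elim=> [|[x [|]] ls IH] w /=; first by rewrite mulg1 !mulr1 mul1r.
- have dxV : d x (inv x) * (eta x * eta (inv x)) = 1.
    by rewrite -eta1 -(mulgV x) eta_d mulrC.
  have dxV_neq0 : d x (inv x) != 0.
    by apply: contra_eq_neq dxV => ->; rewrite mul0r eq_sym oner_eq0.
  have invdxV : (d x (inv x))^-1 = eta x * eta (inv x).
    by rewrite -[LHS]mulr1 -dxV mulKf.
  rewrite mulA -IH eta_d invdxV.
  by field; apply: eta_neq0.
- by rewrite mulA -IH eta_d; field.
Qed.

End Pairing.

Lemma trivializes_eta1 (R : realType) (Gam : Type) (mul : Gam -> Gam -> Gam) (one : Gam)
    (eta : Gam -> R[i]) (d : Gam -> Gam -> R[i]) :
  eta one != 0 -> mul one one = one -> d one one = 1 -> trivializes mul eta d ->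
  eta one = 1.
Proof.
move=> eta1_neq0 mul11 d11 eta_d; apply: (mulfI eta1_neq0).
by rewrite mulr1 -[in RHS]mul11 eta_d d11 mulr1.
Qed.

Definition U1 (R : realType) := {z : R[i] | `|z| == 1}.

Lemma U1_norm (R : realType) (u : U1 R) : `|val u| = 1.
Proof. exact: eqP (valP u). Qed.

Lemma U1_one_subproof (R : realType) : `|1 : R[i]| == 1.
Proof. by rewrite normr1. Qed.

Definition U1_one (R : realType) : U1 R := exist (fun z => `|z| == 1) 1 (U1_one_subproof R).

Section CentralExtension.
Variables (R : realType) (Gam : Type) (mul : Gam -> Gam -> Gam) (inv : Gam -> Gam).
Variables (one : Gam) (d : Gam -> Gam -> R[i]).
Hypotheses (Ggroup : is_group mul inv one) (d_cocycle : normalized_U1_2cocycle mul one d).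

Let d_norm : forall x y, `|d x y| = 1.
Proof. by case: d_cocycle. Qed.

Let d_neq0 x y : d x y != 0.
Proof. exact: norm1_neq0. Qed.

Let d_mul x y z : d y z * d x (mul y z) = d (mul x y) z * d x y.
Proof.
case: d_cocycle => _ _ _ /(_ x y z) cocycle.
by apply: divr1_eq; rewrite -[RHS]cocycle /cobound2; field; rewrite !d_neq0.
Qed.

Let d_inv_sym x : d x (inv x) = d (inv x) x.
Proof.
case: Ggroup => _ _ _ mulVg mulgV; case: d_cocycle => _ d1x dx1 _.
by have := d_mul x (inv x) x; rewrite mulVg mulgV d1x dx1 mulr1 mul1r.
Qed.

Lemma ext_mul_subproof (u v : U1 R) x y : `|val u * val v * d x y| == 1.
Proof. by rewrite !normrM !U1_norm d_norm !mulr1. Qed.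

Lemma ext_inv_subproof (u : U1 R) x : `|(val u * d (inv x) x)^-1| == 1.
Proof. by rewrite normfV normrM U1_norm d_norm !mulr1 invr1. Qed.

Definition ext_mul (p q : U1 R * Gam) : U1 R * Gam :=
  (exist (fun z => `|z| == 1) _ (ext_mul_subproof p.1 q.1 p.2 q.2), mul p.2 q.2).

Definition ext_inv (p : U1 R * Gam) : U1 R * Gam :=
  (exist (fun z => `|z| == 1) _ (ext_inv_subproof p.1 p.2), inv p.2).

Definition ext_one : U1 R * Gam := (U1_one R, one).

Lemma ext_group : is_group ext_mul ext_inv ext_one.
Proof.
case: Ggroup => mulA mul1g mulg1 mulVg mulgV.
case: d_cocycle => _ d1x dx1 _.
split=> [[u x] [v y] [w z]|[u x]|[u x]|[u x]|[u x]]; congr (_, _) => //=;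
  try apply: val_inj => /=.
- transitivity (sval u * sval v * sval w * (d y z * d x (mul y z))); first by ring.
  by rewrite d_mul; ring.
- by rewrite d1x mulr1 mul1r.
- by rewrite dx1 !mulr1.
- by field; rewrite d_neq0 norm1_neq0 ?U1_norm.
- by rewrite d_inv_sym; field; rewrite d_neq0 norm1_neq0 ?U1_norm.
Qed.

Definition ext_lift (x : Gam) : U1 R * Gam := (U1_one R, x).

Lemma ext_mul_eval_lift (u : U1 R) w ls :
  let p := ext_mul (u, w) (eval_word ext_mul ext_inv ext_one
                             [seq (ext_lift l.1, l.2) | l <- ls]) in
  val p.1 = val u * pair_aux mul inv d w ls /\ p.2 = mul w (eval_word mul inv one ls).
Proof.
have [extA _ _ _ _] := ext_group; case: Ggroup => mulA _ _ _ _.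
cbv zeta; elim: ls u w => [|[x b] ls IH] u w.
  by case: d_cocycle => _ _ dx1 _; rewrite /= dx1 !mulr1.
rewrite map_cons !eval_word_cons extA; case E: (ext_mul (u, w) _) => [u' w'].
have [-> ->] := IH u' w'; rewrite mulA.
by case: b E => -[<- <-] /=; split=> //; rewrite ?d_inv_sym ?mul1r; ring.
Qed.

End CentralExtension.

Section SurfaceGroup.
Variables (R : realType) (Gam : Type) (mul : Gam -> Gam -> Gam) (inv : Gam -> Gam).
Variables (one : Gam) (g : nat) (a b : 'I_g -> Gam).
Hypothesis presentation : surface_group_presentation mul inv one a b.

Lemma pairing_trivialized (eta : Gam -> R[i]) (d : Gam -> Gam -> R[i]) :
  U1_valued eta -> d one one = 1 -> trivializes mul eta d ->
  pairing_fundamental mul inv one a b d = 1.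
Proof.
case: presentation => Ggroup relator1 _ eta_norm d11 eta_d.
have eta_neq0 x : eta x != 0 by exact: norm1_neq0.
have [_ mul1g _ _ _] := Ggroup.
have eta1 := trivializes_eta1 (eta_neq0 one) (mul1g one) d11 eta_d.
have := pair_aux_trivialized Ggroup eta_neq0 eta1 eta_d (surface_relator a b) one.
rewrite surface_relator_map relator1 mul1g eta1 !mulr1.
by rewrite (eval_surface_relator_comm (fun i => eta_neq0 (a i)) (fun i => eta_neq0 (b i))) mulr1.
Qed.

Lemma trivialization_of_pairing1 (d : Gam -> Gam -> R[i]) :
  normalized_U1_2cocycle mul one d -> pairing_fundamental mul inv one a b d = 1 ->
  exists eta : Gam -> R[i], U1_valued eta /\ trivializes mul eta d.
Proof.
case: presentation => Ggroup relator1 universal d_cocycle pairing1.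
have Egroup := ext_group Ggroup d_cocycle.
have lift_relator1 :
    eval_word (ext_mul d_cocycle) (ext_inv inv d_cocycle) (ext_one R one)
      (surface_relator (@ext_lift R Gam \o a) (@ext_lift R Gam \o b)) = ext_one R one.
  have [_ ext_mul1g _ _ _] := Egroup.
  rewrite -surface_relator_map -[LHS]ext_mul1g.
  have [eval1 eval2] := ext_mul_eval_lift Ggroup d_cocycle (U1_one R) one (surface_relator a b).
  move: eval1 eval2; case: (ext_mul _ _ _) => u w /= eval1 eval2.
  congr (_, _); last by rewrite eval2 relator1; case: Ggroup.
  by apply: val_inj; rewrite /= eval1 [pair_aux _ _ _ _ _]pairing1 mulr1.
have [[f [f_hom f_gen]] _] := universal _ _ _ _ Egroup _ _ lift_relator1.
have [_ hom_unique] := universal _ _ _ _ Ggroup a b relator1.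
have f2 z : (f z).2 = z.
  apply: (hom_unique (fun z => (f z).2) id) => // [x y|i]; first by rewrite f_hom.
  by have [-> ->] := f_gen i.
exists (fun z => val (f z).1); split=> [z|x y]; first exact: U1_norm.
by rewrite f_hom /= !f2.
Qed.

Lemma trivializable_iff_pairing1 (d : Gam -> Gam -> R[i]) :
  normalized_U1_2cocycle mul one d ->
  (exists eta : Gam -> R[i], U1_valued eta /\ trivializes mul eta d) <->
  pairing_fundamental mul inv one a b d = 1.
Proof.
move=> d_cocycle; split; last exact: trivialization_of_pairing1.
case: d_cocycle => _ d1x _ _ [eta [eta_norm eta_d]].
exact: pairing_trivialized eta_norm (d1x one) eta_d.
Qed.

End SurfaceGroup.

Lemma iso_over_identity_trivializes (R : realType) (Gam : Type) (mul : Gam -> Gam -> Gam)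
    (gamma gamma' : Gam -> Gam -> R[i]) :
  (forall x y, gamma x y != 0) ->
  iso_over_identity mul gamma gamma' <->
  exists eta : Gam -> R[i],
    U1_valued eta /\ trivializes mul eta (fun x y => gamma' x y / gamma x y).
Proof.
move=> gamma_neq0.
have iso_trivializes eta x y :
    eta (mul x y) * gamma x y = gamma' x y * (eta x * eta y) <->
    eta (mul x y) = eta x * eta y * (gamma' x y / gamma x y).
  split=> [iso_xy|->]; last by field; rewrite gamma_neq0.
  by apply: (mulIf (gamma_neq0 x y)); rewrite iso_xy; field; rewrite gamma_neq0.
by split=> -[eta [eta_norm eta_iso]]; exists eta; split=> // x y; apply/iso_trivializes.
Qed.

Lemma weak_rep_quotient_cocycle (R : realType) (gT : finGroupType)
    (alpha : gT -> gT -> gT -> R[i]) (Gam : Type) (mul : Gam -> Gam -> Gam) (one : Gam)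
    (rho : Gam -> gT) (gamma gamma' : Gam -> Gam -> R[i]) :
  normalized_3cocycle alpha ->
  weak_rep_lifting mul one alpha rho gamma -> weak_rep_lifting mul one alpha rho gamma' ->
  normalized_U1_2cocycle mul one (fun x y => gamma' x y / gamma x y).
Proof.
case=> alpha_norm _ _ _ _ [gamma_norm gamma1x gammax1 d_gamma].
case=> [gamma'_norm gamma'1x gamma'x1 d_gamma'].
split=> [x y|x|x|x y z].
- by rewrite normrM normfV gamma_norm gamma'_norm invr1 mulr1.
- by rewrite gamma1x gamma'1x divr1.
- by rewrite gammax1 gamma'x1 divr1.
- by rewrite cobound2_div d_gamma d_gamma' divff // norm1_neq0.
Qed.

Theorem mainTheorem3 (R : realType) (gT : finGroupType)
  (alpha : gT -> gT -> gT -> R[i])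
  (Gam : Type) (mul : Gam -> Gam -> Gam) (inv : Gam -> Gam) (one : Gam)
  (g : nat) (a b : 'I_g -> Gam)
  (rho : Gam -> gT) (gamma gamma' : Gam -> Gam -> R[i]) :
  normalized_3cocycle alpha ->
  (0 < g)%N ->
  surface_group_presentation mul inv one a b ->
  is_hom mul (fun x y => (x * y)%g) rho ->
  weak_rep_lifting mul one alpha rho gamma ->
  weak_rep_lifting mul one alpha rho gamma' ->
  (iso_over_identity mul gamma gamma' <->
   pairing_fundamental mul inv one a b gamma =
   pairing_fundamental mul inv one a b gamma').
Proof.
move=> alpha_cocycle _ presentation _ rep rep'.
have [gamma_norm _ _ _] := rep.
have pairing_neq0 : pairing_fundamental mul inv one a b gamma != 0.
  exact/norm1_neq0/pair_aux_norm1.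
rewrite iso_over_identity_trivializes => [|x y]; last exact: norm1_neq0.
rewrite (trivializable_iff_pairing1 presentation); last first.
  exact: weak_rep_quotient_cocycle rep rep'.
rewrite pairing_fundamental_div.
by split=> [/divr1_eq -> | <-]; last exact: divff.
Qed.
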